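(* Let $A\in\mathbb{R}^{m\times N}$, $K_1,K_{-1}\subseteq[N]$ disjoint, $K=K_1\cup K_{-1}$, $x_\pm=\mathbb{1}_{K_1}-\mathbb{1}_{K_{-1}}$, $0<\rho<1$ and $\tau>0$. The following are equivalent: (i) $A$ satisfies the robust bipolar ternary null space property with constants $\rho,\tau$ relative to $K_{-1},K_1$; (ii) for every $z\in[-1,1]^N$, $|K|-\sum_{i\in K_1}z_i+\sum_{i\in K_{-1}}z_i\le\rho\|z_{K^C}\|_1+\tau\|A(z-x_\pm)\|_2$.
   Context: $\mathbb{1}_S$ has entries $1$ on $S$, $0$ elsewhere; $K^C=[N]\setminus K$; $z_S$ agrees with $z$ on $S$ and is zero elsewhere. $H_{K_1,K_{-1}}=\{w\in\mathbb{R}^N: w_i\le0\text{ for } i\in K_1,\ w_i\ge0 \text{ for } i\in K_{-1}\}$. $A$ satisfies the robust bipolar ternary null space property with constants $\rho,\tau$ relative to $K_{-1},K_1$ if $\sum_{i\in K_{-1}}v_i-\sum_{i\in K_1}v_i\le\rho\sum_{i\in K^C}|v_i|+\tau\|Av\|_2$ for every $v\in H_{K_1,K_{-1}}$. *)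

From mathcomp Require Import all_boot all_order all_algebra.
From mathcomp Require Import reals.
Set Implicit Arguments. Unset Strict Implicit. Unset Printing Implicit Defensive.
Import Order.TTheory GRing.Theory Num.Theory.
Local Open Scope ring_scope.

Definition norm2 (R : realType) (m : nat) (v : 'cV[R]_m) : R :=
  Num.sqrt (\sum_(i < m) (v i 0) ^+ 2).

Definition indic (R : realType) (N : nat) (S : {set 'I_N}) : 'cV[R]_N :=
  \col_i (if i \in S then 1 else 0).

Definition Hset (R : realType) (N : nat) (K1 Km1 : {set 'I_N}) (w : 'cV[R]_N) : Prop :=
  (forall i, i \in K1 -> w i 0 <= 0) /\ (forall i, i \in Km1 -> 0 <= w i 0).

Definition robust_bipolar_ternary_NSP (R : realType) (m N : nat)
    (A : 'M[R]_(m, N)) (Km1 K1 : {set 'I_N}) (rho tau : R) : Prop :=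
  forall v : 'cV[R]_N, Hset K1 Km1 v ->
    \sum_(i in Km1) v i 0 - \sum_(i in K1) v i 0
      <= rho * \sum_(i in ~: (K1 :|: Km1)) `|v i 0| + tau * norm2 (A *m v).

(* Substituting v = z - x_pm turns the left-hand side of (ii) into that of
   the null space inequality at v and leaves the l1 norm off K unchanged,
   and z lies in [-1,1]^N only if v lies in H_{K1,K-1}: this gives (i) => (ii).
   Conversely, for v in H_{K1,K-1} with entries in [-1,1] the point x_pm + v
   lies in the cube, so (ii) yields the null space inequality there, and
   positive homogeneity of both of its sides in v extends it to all of
   H_{K1,K-1}. *)
From mathcomp Require Import all_boot all_order all_algebra.
From mathcomp Require Import reals.
From mathcomp Require Import lra.
Set Implicit Arguments. Unset Strict Implicit. Unset Printing Implicit Defensive.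
Import Order.TTheory GRing.Theory Num.Theory.
Local Open Scope ring_scope.

Lemma norm2Z (R : realType) (m : nat) (t : R) (w : 'cV[R]_m) :
  0 <= t -> norm2 (t *: w) = t * norm2 w.
Proof.
move=> t_ge0; rewrite /norm2.
have -> : \sum_(i < m) ((t *: w) i 0) ^+ 2 = t ^+ 2 * \sum_(i < m) (w i 0) ^+ 2.
  by rewrite mulr_sumr; apply: eq_bigr => i _; rewrite mxE exprMn.
by rewrite sqrtrM ?sqr_ge0 // sqrtr_sqr ger0_norm.
Qed.

Section NSPHomogeneity.
Variables (R : realType) (m N : nat) (A : 'M[R]_(m, N)).
Variables (Km1 K1 : {set 'I_N}) (rho tau : R).

Definition robust_bipolar_ternary_NSP_at (v : 'cV[R]_N) : Prop :=
  \sum_(i in Km1) v i 0 - \sum_(i in K1) v i 0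
    <= rho * \sum_(i in ~: (K1 :|: Km1)) `|v i 0| + tau * norm2 (A *m v).

Lemma HsetZ (t : R) (v : 'cV[R]_N) :
  0 <= t -> Hset K1 Km1 v -> Hset K1 Km1 (t *: v).
Proof.
move=> t_ge0 [vK1 vKm1]; split=> i iK; rewrite mxE.
- exact: mulr_ge0_le0 (vK1 i iK).
- exact: mulr_ge0 (vKm1 i iK).
Qed.

Lemma robust_bipolar_ternary_NSP_atZ (t : R) (v : 'cV[R]_N) :
  0 < t -> robust_bipolar_ternary_NSP_at (t *: v) ->
  robust_bipolar_ternary_NSP_at v.
Proof.
move=> t_gt0; rewrite /robust_bipolar_ternary_NSP_at.
have sumZ (S : {set 'I_N}) : \sum_(i in S) (t *: v) i 0 = t * \sum_(i in S) v i 0.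
  by rewrite mulr_sumr; apply: eq_bigr => i _; rewrite mxE.
have sum_normZ (S : {set 'I_N}) :
    \sum_(i in S) `|(t *: v) i 0| = t * \sum_(i in S) `|v i 0|.
  by rewrite mulr_sumr; apply: eq_bigr => i _; rewrite mxE normrM gtr0_norm.
rewrite !sumZ sum_normZ -scalemxAr (norm2Z _ (ltW t_gt0)).
by rewrite -mulrBr mulrCA [tau * _]mulrCA -mulrDr ler_pM2l.
Qed.

Lemma robust_bipolar_ternary_NSP_from_unit_cube :
  (forall v, Hset K1 Km1 v -> (forall i, `|v i 0| <= 1) ->
     robust_bipolar_ternary_NSP_at v) ->
  robust_bipolar_ternary_NSP A Km1 K1 rho tau.
Proof.
move=> nsp_cube v Hv.
pose S := \sum_(i < N) `|v i 0|.
have S_ge0 : 0 <= S by apply: sumr_ge0 => i _; exact: normr_ge0.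
have t_gt0 : 0 < (1 + S)^-1 by rewrite invr_gt0; lra.
apply: (robust_bipolar_ternary_NSP_atZ t_gt0); apply: nsp_cube.
  exact: HsetZ (ltW t_gt0) Hv.
move=> i; rewrite mxE normrM gtr0_norm // mulrC ler_pdivrMr ?mul1r; last lra.
have : `|v i 0| <= S by rewrite /S (bigD1 i) //= lerDl sumr_ge0.
lra.
Qed.

End NSPHomogeneity.

Section SignVectorShift.
Variables (R : realType) (N : nat) (K1 Km1 : {set 'I_N}).
Hypothesis K1_Km1_disjoint : [disjoint K1 & Km1].

Let xpm : 'cV[R]_N := indic R K1 - indic R Km1.

Lemma xpm_K1 i : i \in K1 -> xpm i 0 = 1.
Proof. by move=> iK1; rewrite !mxE iK1 (disjointFr K1_Km1_disjoint iK1) subr0. Qed.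

Lemma xpm_Km1 i : i \in Km1 -> xpm i 0 = -1.
Proof.
move=> iKm1; rewrite !mxE iKm1 (disjointFl K1_Km1_disjoint iKm1).
by rewrite sub0r.
Qed.

Lemma xpm_out i : i \in ~: (K1 :|: Km1) -> xpm i 0 = 0.
Proof.
rewrite in_setC in_setU negb_or => /andP [/negbTE iK1 /negbTE iKm1].
by rewrite !mxE iK1 iKm1 subr0.
Qed.

Lemma NSP_lhs_subr_xpm (z : 'cV[R]_N) :
  \sum_(i in Km1) (z - xpm) i 0 - \sum_(i in K1) (z - xpm) i 0 =
  #|K1 :|: Km1|%:R - \sum_(i in K1) z i 0 + \sum_(i in Km1) z i 0.
Proof.
have -> : \sum_(i in Km1) (z - xpm) i 0 = \sum_(i in Km1) (z i 0 + 1).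
  by apply: eq_bigr => i iKm1; rewrite mxE [(- xpm) i 0]mxE xpm_Km1 // opprK.
have -> : \sum_(i in K1) (z - xpm) i 0 = \sum_(i in K1) (z i 0 - 1).
  by apply: eq_bigr => i iK1; rewrite mxE [(- xpm) i 0]mxE xpm_K1.
have cardKU : #|K1 :|: Km1| = (#|K1| + #|Km1|)%N.
  by case: (leq_card_setU K1 Km1) => _; rewrite K1_Km1_disjoint => /eqP.
rewrite big_split sumrB /= !sumr_const cardKU natrD; lra.
Qed.

Lemma sum_out_norm_subr_xpm (z : 'cV[R]_N) :
  \sum_(i in ~: (K1 :|: Km1)) `|(z - xpm) i 0| =
  \sum_(i in ~: (K1 :|: Km1)) `|z i 0|.
Proof. by apply: eq_bigr => i iout; rewrite mxE [(- xpm) i 0]mxE xpm_out // subr0. Qed.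

Lemma subr_xpm_Hset (z : 'cV[R]_N) :
  (forall i, -1 <= z i 0 <= 1) -> Hset K1 Km1 (z - xpm).
Proof.
move=> z_cube; split=> i iK; rewrite mxE [(- xpm) i 0]mxE.
- by rewrite xpm_K1 //; case/andP: (z_cube i) => _ ?; lra.
- by rewrite xpm_Km1 //; case/andP: (z_cube i) => ? _; lra.
Qed.

Lemma addr_xpm_cube (v : 'cV[R]_N) :
  Hset K1 Km1 v -> (forall i, `|v i 0| <= 1) ->
  forall i, -1 <= (xpm + v) i 0 <= 1.
Proof.
move=> [vK1 vKm1] v_le1 i; rewrite mxE.
have /andP [? ?] : -1 <= v i 0 <= 1 by rewrite -ler_norml.
have [iK1 | iNK1] := boolP (i \in K1).
  by rewrite xpm_K1 //; move: (vK1 i iK1) => ?; apply/andP; split; lra.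
have [iKm1 | iNKm1] := boolP (i \in Km1).
  by rewrite xpm_Km1 //; move: (vKm1 i iKm1) => ?; apply/andP; split; lra.
rewrite xpm_out ?add0r; first exact/andP.
by rewrite in_setC in_setU negb_or iNK1 iNKm1.
Qed.

End SignVectorShift.

Theorem lemmaA1 (R : realType) (m N : nat) (A : 'M[R]_(m, N))
    (K1 Km1 : {set 'I_N}) (rho tau : R) :
  [disjoint K1 & Km1] -> 0 < rho -> rho < 1 -> 0 < tau ->
  let K := K1 :|: Km1 in
  let xpm : 'cV[R]_N := indic R K1 - indic R Km1 in
  robust_bipolar_ternary_NSP A Km1 K1 rho tau <->
  (forall z : 'cV[R]_N, (forall i, -1 <= z i 0 <= 1) ->
     #|K|%:R - \sum_(i in K1) z i 0 + \sum_(i in Km1) z i 0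
       <= rho * \sum_(i in ~: K) `|z i 0| + tau * norm2 (A *m (z - xpm))).
Proof.
move=> K1_Km1_disjoint _ _ _ K xpm; split.
- move=> nsp z z_cube.
  rewrite -(NSP_lhs_subr_xpm K1_Km1_disjoint) -(sum_out_norm_subr_xpm K1 Km1).
  exact/nsp/subr_xpm_Hset.
- move=> shifted_nsp; apply: robust_bipolar_ternary_NSP_from_unit_cube => v Hv v_le1.
  have := shifted_nsp _ (addr_xpm_cube K1_Km1_disjoint Hv v_le1).
  rewrite -(NSP_lhs_subr_xpm K1_Km1_disjoint) -(sum_out_norm_subr_xpm K1 Km1).
  by rewrite [xpm + v]addrC addrK.
Qed.
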